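(* Among all $(G,\phi,\tau)$ with $G\in\Gamma(F)$, $\phi=(\phi_t,\phi_d)$ with $\phi_d=0$, satisfying (w-P) and (w-HE), the objective $\phi_t+\phi_d(1-G(\tau))$ is maximized by the test-fee structure $(F,\phi)$ with $\phi_d=0$ and $\phi_t=\int_{\mu}^{\overline{\theta}}[s-\mu]\,dF(s)$; that is, this test-fee structure is robustly optimal among all test-fee structures with zero disclosure fee.
   Context: $F$ is a distribution of the asset value with lowest and highest support points $0\le\underline{\theta}<\overline{\theta}<\infty$ and mean $\mu$. $\Gamma(F)$ is the set of CDFs $G$ supported in $[\underline{\theta},\overline{\theta}]$ with $\int_{\underline{\theta}}^xG\le\int_{\underline{\theta}}^xF$ for all $x$ and equality at $x=\overline{\theta}$ (score distributions of unbiased tests). A test-fee structure is $(G,\phi)$ with $G\in\Gamma(F)$ and fees $\phi=(\phi_t,\phi_d)$ (testing, disclosure). (w-P): $\phi_t\le\int_{\mu+\phi_d}^{\overline{\theta}}[s-(\mu+\phi_d)]dG(s)$. (w-HE) for threshold $\tau$: $\tau-\phi_d=E_G[s\mid s\le\tau]$ and $\tau'-\phi_d\ge E_G[s\mid s\le\tau']$ for all $\tau'>\tau$. *)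

From HB Require Import structures.
From mathcomp Require Import all_boot all_order all_algebra.
From mathcomp Require Import all_classical all_reals all_analysis.
Set Implicit Arguments. Unset Strict Implicit. Unset Printing Implicit Defensive.
Import Order.TTheory GRing.Theory Num.Theory.
Local Open Scope classical_set_scope.
Local Open Scope ring_scope.

Section Defs.
Variable R : realType.
Notation distr := (probability R R).

Definition cdfP (G : distr) (x : R) : R := fine (G [set` `]-oo, x]]).

Definition support_bounds (F : distr) (lo hi : R) : Prop :=
  F [set` `[lo, hi]] = 1%E /\
  (forall e : R, 0 < e -> (0 < F [set` `[lo, (lo + e)%R[])%E) /\
  (forall e : R, 0 < e -> (0 < F [set` `](hi - e)%R, hi]])%E).

Definition meanP (G : distr) : R := fine (\int[G]_s (s%:E)).

Definition intcdf (G : distr) (lo x : R) : \bar R :=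
  (\int[lebesgue_measure]_(y in `[lo, x]) (cdfP G y)%:E)%E.

Definition inGamma (F : distr) (lo hi : R) (G : distr) : Prop :=
  G [set` `[lo, hi]] = 1%E /\
  (forall x : R, (intcdf G lo x <= intcdf F lo x)%E) /\
  intcdf G lo hi = intcdf F lo hi.

(* fees phi = (phi_t, phi_d) *)
Definition fees := (R * R)%type.

(* (w-P) with mu the mean of F *)
Definition wP (mu hi : R) (G : distr) (phi : fees) : Prop :=
  (phi.1%:E <= \int[G]_(s in `[(mu + phi.2)%R, hi]) (s - (mu + phi.2))%:E)%E.

(* E_G[s | s <= t]; convention: t when G(t) = 0 *)
Definition condexp_le (G : distr) (t : R) : R :=
  if cdfP G t == 0 then t
  else fine (\int[G]_(s in `]-oo, t]) s%:E) / cdfP G t.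

Definition wHE (lo hi : R) (G : distr) (phi : fees) (tau : R) : Prop :=
  lo <= tau <= hi /\
  tau - phi.2 = condexp_le G tau /\
  (forall tau', tau < tau' -> tau' - phi.2 >= condexp_le G tau').

Definition objective (G : distr) (phi : fees) (tau : R) : R :=
  phi.1 + phi.2 * (1 - cdfP G tau).

End Defs.

(* With a zero disclosure fee the objective is the testing fee alone, and (w-P)
   caps it by the stop-loss value \int_mu^hi (s - mu) dG.  By Fubini (the
   layer-cake formula) this equals (hi - mu) - \int_mu^hi G, and since
   \int_lo^x G <= \int_lo^x F with equality at x = hi, we get
   \int_mu^hi G >= \int_mu^hi F: no admissible G yields a larger stop-loss
   value than F itself, which phi_star charges in full.  Feasibility of (F,
   phi_star) is elementary: phi_star meets (w-P) with equality, and tau = lo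
   satisfies (w-HE) because E_F[s | s <= t] <= t, with equality at t = lo. *)

From HB Require Import structures.
From mathcomp Require Import all_boot all_order all_algebra.
From mathcomp Require Import all_classical all_reals all_analysis.
From mathcomp Require Import measurable_realfun.
Import Order.TTheory GRing.Theory Num.Theory.
Local Open Scope classical_set_scope.
Local Open Scope ring_scope.

Local Notation leb := (@lebesgue_measure _).

Definition stop_loss {R : realType} (P : probability R R) (m hi : R) : \bar R :=
  (\int[P]_(s in `[m, hi]) (s - m)%:E)%E.

Section cdfP.
Context {R : realType} (P : probability R R).

Lemma cdfPE x : (cdfP P x)%:E = P [set` `]-oo, x]].
Proof. by rewrite /cdfP fineK // fin_num_measure. Qed.

Lemma cdfP_ge0 x : 0 <= cdfP P x.
Proof. by rewrite -lee_fin cdfPE measure_ge0. Qed.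

Lemma cdfP_le1 x : cdfP P x <= 1.
Proof. by rewrite -lee_fin cdfPE probability_le1. Qed.

Lemma nondecreasing_cdfP : nondecreasing_fun (cdfP P).
Proof.
move=> x y xy; rewrite -lee_fin !cdfPE; apply: le_measure; rewrite ?inE //.
by apply: subset_itvl; rewrite bnd_simp.
Qed.

Lemma measurable_cdfP (D : set R) : measurable D -> measurable_fun D (cdfP P).
Proof. by move=> mD; exact: nondecreasing_measurable nondecreasing_cdfP. Qed.

Lemma integral_cdfP_fin_num a b : (\int[leb]_(y in `[a, b]) (cdfP P y)%:E)%E \is a fin_num.
Proof.
rewrite ge0_fin_numE; last by apply: integral_ge0 => y _; rewrite lee_fin cdfP_ge0.
apply: (@le_lt_trans _ _ (\int[leb]_(y in `[a, b]) 1%:E)%E).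
  apply: ge0_le_integral => //.
  - by move=> y _; rewrite lee_fin cdfP_ge0.
  - by apply/measurable_EFinP; exact: measurable_cdfP.
  - by move=> y _; rewrite lee_fin cdfP_le1.
rewrite integral_cst// mul1e; have := lebesgue_measure_itv `[a, b]; rewrite /= => ->.
by case: ifP; rewrite ?ltry.
Qed.

Lemma intcdf_split lo m hi : lo <= m -> m <= hi ->
  intcdf P lo hi = (intcdf P lo m + \int[leb]_(y in `[m, hi]) (cdfP P y)%:E)%E.
Proof.
move=> lom mhi; rewrite /intcdf.
rewrite (@itv_bndbnd_setU _ _ (BLeft lo) (BLeft m) (BRight hi)) ?bnd_simp//.
have mcdf (D : set R) : measurable D -> measurable_fun D (fun y => (cdfP P y)%:E).
  by move=> mD; apply/measurable_EFinP; exact: measurable_cdfP.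
rewrite ge0_integral_setU //=.
- by rewrite integral_itv_bndo_bndc //; exact: mcdf.
- by apply: mcdf; exact: measurableU.
- by move=> y _; rewrite lee_fin cdfP_ge0.
- apply: lt_disjoint => x y; rewrite !in_itv /= => /andP[_ xm] /andP[my _].
  exact: lt_le_trans xm my.
Qed.

End cdfP.

Section layer_cake.
Context {R : realType} (m hi : R).

Definition excess_region : set (R * R) :=
  [set z | (m <= z.2) && (z.2 < z.1) && (z.1 <= hi)].

Lemma measurable_excess_region : measurable excess_region.
Proof.
have : measurable_fun setT (fun z : R * R => (m <= z.2) && (z.2 < z.1) && (z.1 <= hi)).
  apply: measurable_and; first apply: measurable_and.
  - exact: measurable_fun_ler.
  - exact: measurable_fun_ltr.
  - exact: measurable_fun_ler.
by move=> /(_ measurableT [set true]); rewrite setTI; apply.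
Qed.

Lemma lebesgue_xsection_excess_region s :
  leb (xsection excess_region s) = (if s \in `[m, hi] then (s - m)%:E else 0)%E.
Proof.
rewrite in_itv /=; have [shi|his] := leP s hi; last first.
  rewrite andbF -(measure0 leb); congr (leb _); apply/seteqP; split => y //.
  by rewrite /xsection /= in_setE /excess_region /= => /andP[_]; rewrite leNgt his.
have -> : xsection excess_region s = [set` `[m, s[].
  apply/seteqP; split => y; rewrite /xsection /= in_setE /excess_region /= in_itv /= shi andbT //.
rewrite lebesgue_measure_itv /= lte_fin andbT -EFinB.
by case: ltgtP => // ->; rewrite subrr.
Qed.

Lemma prob_ysection_excess_region (P : probability R R) y : P [set` `]-oo, hi]] = 1%E ->
  P (ysection excess_region y) = (if y \in `[m, hi] then (1 - cdfP P y)%:E else 0)%E.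
Proof.
move=> Phi; rewrite in_itv /=; case: ifPn => [/andP[my yhi]|yI]; last first.
  rewrite -(measure0 P); congr (P _); apply/seteqP; split => s //.
  rewrite /ysection /= in_setE /excess_region /= => /andP[/andP[my ys] shi].
  by move: yI; rewrite my (le_trans (ltW ys) shi).
have -> : ysection excess_region y = [set` `]-oo, hi]] `\` [set` `]-oo, y]].
  apply/seteqP; split => s; rewrite /ysection /= in_setE /excess_region /= !in_itv /= my /=.
  - by move=> /andP[ys shi]; split => //; apply/negP; rewrite -ltNge.
  - by move=> [shi /negP]; rewrite -ltNge => ys; rewrite ys shi.
rewrite measureD //= ?Phi ?ltry // setIidr ?EFinB ?cdfPE //.
by apply: subset_itvl; rewrite bnd_simp.
Qed.

Lemma stop_loss_layer_cake (P : probability R R) : P [set` `]-oo, hi]] = 1%E ->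
  stop_loss P m hi = (\int[leb]_(y in `[m, hi]) (1 - cdfP P y)%:E)%E.
Proof.
move=> Phi; have mA := measurable_excess_region.
rewrite /stop_loss integral_mkcond [RHS]integral_mkcond.
transitivity (\int[P]_s (leb \o xsection excess_region) s)%E.
  by apply: eq_integral => s _; rewrite patchE mem_setE /= lebesgue_xsection_excess_region.
transitivity (\int[leb]_y (P \o ysection excess_region) y)%E.
  have := indic_fubini_tonelli P leb mA.
  by rewrite indic_fubini_tonelli_FE // indic_fubini_tonelli_GE.
by apply: eq_integral => y _; rewrite patchE mem_setE /= prob_ysection_excess_region.
Qed.

End layer_cake.

Section stop_loss.
Context {R : realType}.
Implicit Types (P F G : probability R R) (lo m hi : R).

Lemma stop_lossE P m hi : m <= hi -> P [set` `]-oo, hi]] = 1%E ->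
  stop_loss P m hi = ((hi - m)%:E - \int[leb]_(y in `[m, hi]) (cdfP P y)%:E)%E.
Proof.
move=> mhi Phi; rewrite stop_loss_layer_cake //.
rewrite -[LHS](addeK _ (integral_cdfP_fin_num P m hi)); congr (_ - _)%E.
rewrite -ge0_integralD //; first last.
- by apply/measurable_EFinP; exact: measurable_cdfP.
- by move=> y _; rewrite lee_fin cdfP_ge0.
- by apply/measurable_EFinP; apply: measurable_funB => //; exact: measurable_cdfP.
- by move=> y _; rewrite lee_fin subr_ge0 cdfP_le1.
under eq_integral do rewrite -EFinD subrK.
rewrite integral_cst // mul1e; have := lebesgue_measure_itv `[m, hi]; rewrite /= => ->.
by rewrite lte_fin -EFinB; case: ltgtP mhi => // -> _; rewrite subrr.
Qed.

Lemma stop_loss_fin_num P m hi : m <= hi -> P [set` `]-oo, hi]] = 1%E ->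
  stop_loss P m hi \is a fin_num.
Proof. by move=> mhi Phi; rewrite stop_lossE // fin_numB integral_cdfP_fin_num. Qed.

Lemma stop_loss_le_intcdf F G lo m hi : lo <= m -> m <= hi ->
    F [set` `]-oo, hi]] = 1%E -> G [set` `]-oo, hi]] = 1%E ->
    (intcdf G lo m <= intcdf F lo m)%E -> intcdf G lo hi = intcdf F lo hi ->
  (stop_loss G m hi <= stop_loss F m hi)%E.
Proof.
move=> lom mhi Fhi Ghi le_m eq_hi; rewrite !stop_lossE //; apply: leeB => //.
have IFm : intcdf F lo m \is a fin_num by exact: integral_cdfP_fin_num.
rewrite -(leeD2lE _ _ IFm) -(intcdf_split F lo m hi lom mhi) -eq_hi.
by rewrite (intcdf_split G lo m hi lom mhi) leeD2rE // integral_cdfP_fin_num.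
Qed.

End stop_loss.

Lemma fine_integral_bounds {R : realType} d (T : measurableType d)
    (P : {finite_measure set T -> \bar R}) (D : set T) (f : T -> R) a b :
    measurable D -> measurable_fun D f -> 0 <= a -> (forall x, D x -> a <= f x <= b) ->
  a * fine (P D) <= fine (\int[P]_(x in D) (f x)%:E)%E <= b * fine (P D).
Proof.
move=> mD mf a0 fab; have PDfin : P D \is a fin_num by exact: fin_num_measure.
have mfE : measurable_fun D (EFin \o f) by exact/measurable_EFinP.
have lb : ((a * fine (P D))%:E <= \int[P]_(x in D) (f x)%:E)%E.
  rewrite EFinM fineK // -integral_cst //; apply: ge0_le_integral => //.
  by move=> x /fab /andP[+ _]; rewrite lee_fin.
have ub : (\int[P]_(x in D) (f x)%:E <= (b * fine (P D))%:E)%E.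
  rewrite EFinM fineK // -integral_cst //; apply: ge0_le_integral => //.
  - by move=> x /fab /andP[ax _]; rewrite lee_fin (le_trans a0).
  - by move=> x /fab /andP[_ +]; rewrite lee_fin.
have Ifin : (\int[P]_(x in D) (f x)%:E)%E \is a fin_num.
  rewrite ge0_fin_numE ?(le_lt_trans ub) ?ltry //.
  by apply: le_trans lb; rewrite lee_fin mulr_ge0 // fine_ge0 // measure_ge0.
by rewrite -!lee_fin fineK // lb ub.
Qed.

Section clamp.
Context {R : realType} (lo hi : R).

Definition clamp (x : R) : R := Num.min (Num.max x lo) hi.

Lemma nondecreasing_clamp : nondecreasing_fun clamp.
Proof. by move=> x y xy; rewrite /clamp le_min2 // le_max2. Qed.

Lemma clamp_id x : lo <= x <= hi -> clamp x = x.
Proof. by move=> /andP[lox xhi]; rewrite /clamp max_l // min_l. Qed.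

Lemma clamp_lo x : lo <= hi -> x <= lo -> clamp x = lo.
Proof. by move=> lohi xlo; rewrite /clamp max_r // min_l. Qed.

Lemma clamp_itv x : lo <= hi -> lo <= clamp x <= hi.
Proof. by move=> lohi; rewrite /clamp le_min ge_min le_max !lexx lohi !orbT. Qed.

Lemma clamp_le x t : x <= t -> lo <= t -> clamp x <= t.
Proof. by move=> xt lot; rewrite /clamp ge_min ge_max xt lot. Qed.

End clamp.

Section supported.
Context {R : realType} {P : probability R R} {lo hi : R}.
Hypotheses (lo_ge0 : 0 <= lo) (lo_le_hi : lo <= hi) (P_lohi : P [set` `[lo, hi]] = 1%E).

Lemma probability_le_hi : P [set` `]-oo, hi]] = 1%E.
Proof.
apply/eqP; rewrite eq_le probability_le1 //= -P_lohi; apply: le_measure; rewrite ?inE //.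
by apply: subset_itvr; rewrite bnd_simp.
Qed.

Lemma probability_setC_itv : P (~` [set` `[lo, hi]]) = 0%E.
Proof. by rewrite probability_setC // P_lohi subee. Qed.

(* Since the clamp is bounded, no integrability argument is needed after this
   substitution. *)
Lemma integral_id_clamp (D : set R) : measurable D ->
  (\int[P]_(s in D) s%:E = \int[P]_(s in D) (clamp lo hi s)%:E)%E.
Proof.
move=> mD; apply: ae_eq_integral => //.
- by apply/measurable_EFinP; exact: nondecreasing_measurable (@nondecreasing_clamp _ lo hi).
exists (~` [set` `[lo, hi]]); split => //.
- exact: measurableC.
- exact: probability_setC_itv.
by move=> x /= Nx lohi_x; apply: Nx => _; rewrite clamp_id.
Qed.

Lemma fine_integral_id_bounds (D : set R) b : measurable D ->
    (forall x, D x -> clamp lo hi x <= b) ->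
  lo * fine (P D) <= fine (\int[P]_(s in D) s%:E)%E <= b * fine (P D).
Proof.
move=> mD clamp_b; rewrite integral_id_clamp //; apply: fine_integral_bounds => //.
- exact: nondecreasing_measurable (@nondecreasing_clamp _ lo hi).
- by move=> x Dx; rewrite clamp_b // andbT; case/andP: (clamp_itv lo hi x lo_le_hi).
Qed.

Lemma meanP_itv : lo <= meanP P <= hi.
Proof.
have := @fine_integral_id_bounds setT hi measurableT.
rewrite probability_setT /= !mulr1; apply => x _.
by case/andP: (clamp_itv lo hi x lo_le_hi).
Qed.

Lemma condexp_le_bounds t : lo <= t -> (forall x, x <= t -> clamp lo hi x <= t) ->
  lo <= condexp_le P t <= t.
Proof.
move=> lot clamp_t; rewrite /condexp_le.
case: ifPn => [_|cdf_neq0]; first by rewrite lot lexx.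
have cdf_gt0 : 0 < cdfP P t by rewrite lt_def cdf_neq0 cdfP_ge0.
rewrite ler_pdivlMr // ler_pdivrMr //.
apply: fine_integral_id_bounds => // x; rewrite /= in_itv /=; exact: clamp_t.
Qed.

Lemma condexp_le_lo : condexp_le P lo = lo.
Proof.
apply/eqP; rewrite eq_le andbC; apply: condexp_le_bounds => // x xlo.
by rewrite clamp_lo.
Qed.

Lemma condexp_le_le t : lo < t -> condexp_le P t <= t.
Proof.
move=> lot; have clamp_t x : x <= t -> clamp lo hi x <= t.
  by move=> xt; apply: clamp_le => //; exact: ltW.
by case/andP: (condexp_le_bounds t (ltW lot) clamp_t).
Qed.

End supported.

Theorem lemma10 (R : realType) (F : probability R R) (lo hi : R) :
  0 <= lo -> lo < hi -> support_bounds F lo hi ->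
  let mu := meanP F in
  let phi_star : fees R :=
    (fine (\int[F]_(s in `[mu, hi]) (s - mu)%:E)%E, 0) in
  [/\ inGamma F lo hi F,
      wP mu hi F phi_star,
      (exists tau, wHE lo hi F phi_star tau) &
      forall (G : probability R R) (phi : fees R) (tau tau0 : R),
        inGamma F lo hi G -> phi.2 = 0 ->
        wP mu hi G phi -> wHE lo hi G phi tau ->
        wHE lo hi F phi_star tau0 ->
        objective G phi tau <= objective F phi_star tau0].
Proof.
move=> lo_ge0 lo_lt_hi [F_lohi _] mu phi_star; have lo_le_hi := ltW lo_lt_hi.
have F_hi := probability_le_hi F_lohi.
have /andP[lo_le_mu mu_le_hi] : lo <= mu <= hi := meanP_itv lo_ge0 lo_le_hi F_lohi.
have stop_loss_F_fin : stop_loss F mu hi \is a fin_num by exact: stop_loss_fin_num.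
split.
- by split.
- by rewrite /wP /= addr0 fineK.
- exists lo; split; first by rewrite lexx lo_le_hi.
  split; first by rewrite /= subr0 (condexp_le_lo lo_ge0 lo_le_hi F_lohi).
  by move=> t lot; rewrite /= subr0 (condexp_le_le lo_ge0 lo_le_hi F_lohi).
move=> G phi tau tau0 [G_lohi [G_le G_eq]] phi2 wP_G _ _.
rewrite /objective phi2 /= !mul0r !addr0 -lee_fin fineK //.
move: wP_G; rewrite /wP phi2 addr0 => /le_trans; apply.
exact: stop_loss_le_intcdf lo_le_mu mu_le_hi F_hi (probability_le_hi G_lohi) (G_le mu) G_eq.
Qed.
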